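(* Let $k$ be a positive integer and let $n>\frac{k(k-1)}{2}$. Among the partitions counted by $D_k(n)$, those with an even number of parts exceeding the smallest part are equinumerous with those having an odd number of such parts, i.e. $D_k^e(n)=D_k^o(n)$. Consequently, $D_k(n)$ is even.
   Context: $D_k(n)$ is the number of partitions of $n$ into non-negative parts (the part $0$ is allowed) in which the smallest part appears exactly $k$ times and no other part is repeated. $D_k^e(n)$ (resp. $D_k^o(n)$) is the number of such partitions in which the number of parts greater than the smallest part is even (resp. odd). *)

From mathcomp Require Import all_boot.
Set Implicit Arguments. Unset Strict Implicit. Unset Printing Implicit Defensive.

(* A partition of n into non-negative parts (part 0 allowed) is represented
   as a nonincreasing list of naturals with sum n. *)
Definition is_part (n : nat) (s : seq nat) : bool :=
  sorted geq s && (sumn s == n).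

Definition smallest (s : seq nat) : nat := foldr minn (head 0 s) s.

Definition big_parts (s : seq nat) : seq nat :=
  filter (fun x => smallest s < x) s.

Definition Dk_part (k n : nat) (s : seq nat) : bool :=
  [&& is_part n s, s != [::], count_mem (smallest s) s == k
    & uniq (big_parts s)].

Fixpoint seqs_upto (L M : nat) : seq (seq nat) :=
  match L with
  | 0 => [:: [::]]
  | L'.+1 => [::] :: [seq x :: t | x <- iota 0 M.+1, t <- seqs_upto L' M]
  end.

(* Every partition counted by D_k(n) has all entries <= n and length
   k + m with m <= n (the m parts above the smallest are distinct positive
   integers summing to at most n), hence lies in seqs_upto (n + k) n.
   So the following counts are exactly the cardinalities of the sets. *)
Definition D (k n : nat) : nat := count (Dk_part k n) (seqs_upto (n + k) n).

Definition De (k n : nat) : nat :=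
  count (fun s => Dk_part k n s && ~~ odd (size (big_parts s)))
        (seqs_upto (n + k) n).

Definition Do (k n : nat) : nat :=
  count (fun s => Dk_part k n s && odd (size (big_parts s)))
        (seqs_upto (n + k) n).

From mathcomp Require Import all_boot all_algebra.
From mathcomp Require Import zify ring.
Set Implicit Arguments. Unset Strict Implicit. Unset Printing Implicit Defensive.
Import GRing.Theory Num.Theory.

(* The signed count De - Do is the coefficient of q^n in
     B_k(u) = \sum_(x < u) q^(k x) \prod_(x < y < u) (1 - q^y)
   for any u > n: a partition counted by D_k(n) with smallest part x consists of
   k copies of x and a set of distinct parts y in (x, u), each contributing -q^y.
   For u > 0 these polynomials satisfy B_1(u) = 1 and
   B_(k+1)(u) = (1 - q^k) B_k(u) + q^(k u), so by induction on k the
   coefficient of q^n in B_k(u) vanishes whenever k(k-1)/2 < n < u. *)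

Lemma seqs_uptoS L M : seqs_upto L.+1 M =
  [::] :: [seq x :: t | x <- iota 0 M.+1, t <- seqs_upto L M].
Proof. by []. Qed.

Lemma mem_seqs_upto L M s :
  (s \in seqs_upto L M) = (size s <= L) && all (fun x => x <= M) s.
Proof.
elim: L s => [|L IH] [|x t] //; rewrite seqs_uptoS in_cons orFb.
apply/allpairsPdep/andP => [[y [u [+ + [-> ->]]]] | [size_t all_xt]].
  by rewrite mem_iota IH ltnS /= => -> /andP[].
exists x, t; move: all_xt; rewrite mem_iota IH /= => /andP[xM ->].
by rewrite ltnS xM andbT; split.
Qed.

Lemma uniq_seqs_upto L M : uniq (seqs_upto L M).
Proof.
elim: L => [|L IH] //; rewrite seqs_uptoS cons_uniq; apply/andP; split.
  by apply/allpairsPdep => -[x [t [_ _]]].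
apply: allpairs_uniq_dep => //; first exact: iota_uniq.
by move=> [a b] [c d] _ _ /= [-> ->].
Qed.

Lemma mem_leq_sumn (s : seq nat) x : x \in s -> x <= sumn s.
Proof.
elim: s => [|y s IH] //=; rewrite inE => /predU1P[->|/IH]; first exact: leq_addr.
by move/leq_trans; apply; apply: leq_addl.
Qed.

Lemma sorted_nseq k (x : nat) : sorted geq (nseq k x).
Proof. by elim: k => [|[|k] IH] //=; rewrite leqnn. Qed.

Lemma smallest_le s x : x \in s -> smallest s <= x.
Proof.
rewrite /smallest; move: (head 0 s) => c.
elim: s => [|y s IH] //=; rewrite inE => /predU1P[->|/IH]; first exact: geq_minl.
exact/leq_trans/geq_minr.
Qed.

Lemma foldr_minnA c d (t : seq nat) :
  foldr minn (minn c d) t = minn c (foldr minn d t).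
Proof. by elim: t => [|y t IH] //=; rewrite IH minnCA. Qed.

Lemma smallest_cons2 x y t : y <= x ->
  smallest [:: x, y & t] = smallest (y :: t).
Proof.
move=> le_yx; rewrite /smallest /= -[RHS]foldr_minnA minnn.
by rewrite -foldr_minnA (minn_idPl le_yx) -foldr_minnA minnC (minn_idPl le_yx).
Qed.

Lemma smallest_nseq k x : smallest (nseq k.+1 x) = x.
Proof.
by rewrite /smallest /=; elim: k => [|k IH] /=; rewrite ?IH minnn.
Qed.

Lemma big_parts_nseq k x : big_parts (nseq k.+1 x) = [::].
Proof. by rewrite /big_parts smallest_nseq filter_nseq ltnn. Qed.

Lemma Dk_part_nseq k n x : 0 < k -> Dk_part k n (nseq k x) = (k * x == n).
Proof.
case: k => // k _; rewrite /Dk_part /is_part big_parts_nseq smallest_nseq.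
by rewrite sorted_nseq sumn_nseq count_nseq /= eqxx mul1n eqxx !andbT mulnC.
Qed.

Lemma Dk_part_eq_nseq k n x t : Dk_part k n [:: x, x & t] -> [:: x, x & t] = nseq k x.
Proof.
set s := [:: x, x & t]; case/and4P => /andP[sorted_s _] _ count_s uniq_s.
have min_s : smallest s = x.
  apply/eqP; rewrite eqn_leq smallest_le ?mem_head // leqNgt.
  by apply: contraL uniq_s => lt_x; rewrite /big_parts /s /= lt_x /= mem_head.
have all_x : all (pred1 x) s.
  have /allP le_x := order_path_min (rev_trans leq_trans) sorted_s.
  apply/allP => z s_z; rewrite /= eqn_leq -{2}min_s smallest_le // andbT.
  by move: s_z; rewrite inE => /predU1P[-> // | /le_x].
move: count_s; rewrite min_s; move/all_pred1P: all_x => ->.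
by rewrite count_nseq /= eqxx mul1n => /eqP <-.
Qed.

Lemma big_parts_cons_lt x y t : y < x ->
  big_parts [:: x, y & t] = x :: big_parts (y :: t).
Proof.
move=> lt_yx; have min_le_y : smallest (y :: t) <= y by rewrite smallest_le ?mem_head.
by rewrite /big_parts smallest_cons2 ?(ltnW lt_yx) //= (leq_ltn_trans min_le_y lt_yx).
Qed.

Lemma Dk_part_cons_lt k n x y t : y < x ->
  Dk_part k n [:: x, y & t] = (x <= n) && Dk_part k (n - x) (y :: t).
Proof.
move=> lt_yx; have min_le_y : smallest (y :: t) <= y by rewrite smallest_le ?mem_head.
rewrite /Dk_part /is_part big_parts_cons_lt // smallest_cons2 ?(ltnW lt_yx) //=.
have [sorted_yt | ] := boolP (path geq y t); last by rewrite !andbF.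
have x_big : x \notin big_parts (y :: t).
  have /allP le_y := order_path_min (rev_trans leq_trans) sorted_yt.
  apply: contraL lt_yx; rewrite mem_filter inE => /andP[_ /predU1P[-> | /le_y]].
    by rewrite ltnn.
  by move=> /= le_xy; rewrite -leqNgt.
rewrite (ltnW lt_yx) x_big (gtn_eqF (leq_ltn_trans min_le_y lt_yx)) /=.
rewrite add0n; case: (leqP x n) => [le_xn | lt_nx].
  suff -> : (x + (y + sumn t) == n) = (y + sumn t == n - x) by [].
  by apply/eqP/eqP; lia.
by rewrite gtn_eqF // ltn_addr.
Qed.

Lemma Dk_part_sorted k n s : Dk_part k n s -> sorted geq s.
Proof. by case/and4P => /andP[]. Qed.

Lemma all_ltn_sorted v y t :
  sorted geq (y :: t) -> all (fun z => z < v) (y :: t) = (y < v).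
Proof.
move=> /(order_path_min (rev_trans leq_trans)) /allP le_y /=.
by apply: andb_idr => lt_yv; apply/allP => z /le_y le_zy; apply: leq_ltn_trans le_zy lt_yv.
Qed.

Local Open Scope ring_scope.

Definition signed_weight (k n u : nat) (s : seq nat) : int :=
  if Dk_part k n s && all (fun y => (y < u)%N) s then (-1) ^+ size (big_parts s) else 0.

Lemma signed_weight_nil k n u : signed_weight k n u [::] = 0.
Proof. by rewrite /signed_weight /Dk_part andbF. Qed.

Lemma signed_weight_cons_ge k n u x t : (u <= x)%N -> signed_weight k n u (x :: t) = 0.
Proof. by move=> le_ux; rewrite /signed_weight /= ltnNge le_ux /= andbF. Qed.

Lemma signed_weight_cons_lt k n u x y t : (y < x)%N -> (x < u)%N ->
  signed_weight k n u [:: x, y & t] =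
  - (if (x <= n)%N then signed_weight k (n - x) x (y :: t) else 0).
Proof.
move=> lt_yx lt_xu; rewrite /signed_weight Dk_part_cons_lt // big_parts_cons_lt //.
case: (leqP x n) => [le_xn | _]; last by rewrite oppr0.
case D_yt: (Dk_part k (n - x) (y :: t)); last by rewrite oppr0.
have sorted_yt := Dk_part_sorted D_yt.
have sorted_xyt : sorted geq [:: x, y & t] by rewrite /= (ltnW lt_yx); exact: sorted_yt.
rewrite (all_ltn_sorted _ sorted_xyt) (all_ltn_sorted _ sorted_yt) lt_xu lt_yx.
by rewrite exprS mulN1r.
Qed.

Lemma signed_weight_cons_eq k n u x t : (0 < k)%N -> (x < u)%N ->
  signed_weight k n u [:: x, x & t] = ((x :: t == nseq k.-1 x) && (k * x == n)%N)%:R.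
Proof.
move=> k_gt0 lt_xu; have nseqE : nseq k x = x :: nseq k.-1 x by case: k k_gt0.
rewrite /signed_weight; have [eq_t | neq_t] := eqVneq (x :: t) (nseq k.-1 x).
  rewrite eq_t -nseqE Dk_part_nseq // all_nseq lt_xu orbT andbT.
  by case: k k_gt0 {nseqE eq_t} => // k _; rewrite big_parts_nseq; case: eqP.
case D_s: (Dk_part k n _) => //.
by move/Dk_part_eq_nseq: D_s; rewrite nseqE => -[eq_t]; rewrite eq_t eqxx in neq_t.
Qed.

(* Removing the largest part [x]: either only the [k - 1] other copies of the
   smallest part [x] remain, or a [D_k(n - x)] partition with parts below [x]
   and one big part fewer. *)
Lemma signed_weight_cons k n u x t : (0 < k)%N -> (x < u)%N ->
  signed_weight k n u (x :: t) =
  ((t == nseq k.-1 x) && (k * x == n)%N)%:R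
  - (if (x <= n)%N then signed_weight k (n - x) x t else 0).
Proof.
move=> k_gt0 lt_xu; case: t => [|y t].
  rewrite signed_weight_nil if_same subr0 /signed_weight /Dk_part /is_part.
  rewrite /big_parts /smallest /= minnn ltnn eqxx !addn0 lt_xu.
  case: k k_gt0 => [|[|k]] // _; last by rewrite andbF.
  by rewrite mul1n; case: (x == n).
have nseq_neq : y != x -> (y :: t == nseq k.-1 x) = false.
  by move=> neq_yx; case: k.-1 => [|j] //=; rewrite eqseq_cons (negbTE neq_yx).
case: (ltngtP x y) => [lt_xy | lt_yx | <-].
- rewrite nseq_neq ?(gtn_eqF lt_xy) // (signed_weight_cons_ge _ _ _ (ltnW lt_xy)).
  rewrite if_same subr0.
  by rewrite /signed_weight /Dk_part /is_part /= leqNgt lt_xy.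
- by rewrite nseq_neq ?(ltn_eqF lt_yx) // sub0r signed_weight_cons_lt.
- by rewrite (signed_weight_cons_ge _ _ _ (leqnn x)) if_same subr0 signed_weight_cons_eq.
Qed.

Definition signed_count (L M k n u : nat) : int :=
  \sum_(s <- seqs_upto L M) signed_weight k n u s.

Lemma signed_count0 L M k n : signed_count L M k n 0 = 0.
Proof.
rewrite /signed_count big1 // => -[|x t] _; first exact: signed_weight_nil.
exact: signed_weight_cons_ge.
Qed.

Lemma sum_indicator_seqs_upto L M (a : seq nat) (b : bool) :
  a \in seqs_upto L M -> \sum_(t <- seqs_upto L M) ((t == a) && b)%:R = b%:R :> int.
Proof.
move=> a_in; rewrite (bigD1_seq a a_in (uniq_seqs_upto L M)) eqxx /= big1 ?addr0 //.
by move=> t /negbTE ->.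
Qed.

Lemma signed_countS L M k n u : (0 < k)%N -> (k <= L.+1)%N ->
  signed_count L.+1 M k n u =
  \sum_(0 <= x < M.+1 | (x < u)%N)
    ((k * x == n)%:R - (if (x <= n)%N then signed_count L M k (n - x) x else 0)).
Proof.
move=> k_gt0 le_kL; rewrite /signed_count seqs_uptoS big_cons signed_weight_nil add0r.
rewrite big_allpairs_dep [RHS]big_mkcond /index_iota subn0.
apply: eq_big_seq => x; rewrite mem_iota add0n ltnS => /andP[_ le_xM].
case: ltnP => [lt_xu | le_ux]; last by rewrite big1 // => t _; rewrite signed_weight_cons_ge.
under eq_bigr do rewrite signed_weight_cons //.
rewrite sumrB sum_indicator_seqs_upto; last first.
  by rewrite mem_seqs_upto size_nseq all_nseq le_xM orbT andbT -ltnS prednK.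
by case: leqP => // _; rewrite big1.
Qed.

(* [Dpoly k u] is B_k(u); the recursion splits off the factor (1 - 'X^u) of
   the terms x < u and adds the new term x = u. *)
Fixpoint Dpoly (k u : nat) : {poly int} :=
  if u is u'.+1 then (1 - 'X^u') * Dpoly k u' + 'X^(k * u') else 0.

Lemma DpolyS k u : Dpoly k u.+1 = (1 - 'X^u) * Dpoly k u + 'X^(k * u).
Proof. by []. Qed.

Lemma coef_Dpoly k u n : (Dpoly k u)`_n =
  \sum_(0 <= x < u) ((k * x == n)%:R - (if (x <= n)%N then (Dpoly k x)`_(n - x) else 0)).
Proof.
elim: u => [|u IH]; first by rewrite coef0 big_geq.
rewrite big_nat_recr //= -IH coefD mulrBl mul1r coefB coefXnM coefXn eq_sym ltnNge.
by case: (u <= n)%N => /=; ring.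
Qed.

Lemma signed_count_Dpoly L M k n u : (0 < k)%N -> (n + k <= L)%N -> (u <= M.+1)%N ->
  signed_count L M k n u = (Dpoly k u)`_n.
Proof.
move=> k_gt0; elim: L n u => [|L IH] n u le_nkL le_uM.
  by case: k k_gt0 le_nkL => // k _; rewrite addnS.
rewrite signed_countS //; last by lia.
rewrite coef_Dpoly (big_nat_widen 0 u M.+1) //; apply: eq_bigr => -[|x] lt_xu.
  by rewrite signed_count0 /= coef0.
congr (_ - _); case: leqP => // le_xn; apply: IH; lia.
Qed.

Lemma Dpoly_succ k u : (0 < u)%N -> Dpoly k.+1 u = (1 - 'X^k) * Dpoly k u + 'X^(k * u).
Proof.
case: u => // u _; elim: u => [|u IH].
  by rewrite !DpolyS !mulr0 !add0r !muln0 expr0 mulr1 muln1 subrK.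
rewrite [Dpoly k.+1 _]DpolyS IH [Dpoly k u.+2]DpolyS mulSn !mulnS !exprD.
ring.
Qed.

Lemma coef_Dpoly_eq0 k u n : (0 < k)%N -> (n < u)%N -> (k * (k - 1) < 2 * n)%N ->
  (Dpoly k u)`_n = 0.
Proof.
move=> + lt_nu; have u_gt0 : (0 < u)%N by apply: leq_ltn_trans lt_nu.
elim: k n lt_nu => [|[|k] IH] // n lt_nu _ lt_kn.
  by rewrite Dpoly_succ // expr0 subrr mul0r add0r coef1; case: n lt_nu lt_kn.
have lt_n_ku : (n < k.+1 * u)%N by apply: leq_trans lt_nu (leq_pmull _ _).
rewrite Dpoly_succ // coefD mulrBl mul1r coefB coefXnM coefXn (ltn_eqF lt_n_ku) addr0.
rewrite IH //; last by nia.
by case: ltnP => // le_kn; rewrite IH //; nia.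
Qed.

Lemma count_sign T (P : pred T) (f : T -> nat) (l : seq T) :
  (count (fun s => P s && ~~ odd (f s)) l)%:R - (count (fun s => P s && odd (f s)) l)%:R
  = \sum_(s <- l) (if P s then (-1) ^+ f s else 0) :> int.
Proof.
elim: l => [|s l IH]; first by rewrite big_nil subrr.
rewrite big_cons /= -IH !natrD -signr_odd.
by case: (P s); case: (odd (f s)); rewrite /= ?expr0 ?expr1; ring.
Qed.

Local Close Scope ring_scope.

Lemma count_split T (P Q : pred T) (l : seq T) :
  count P l = count (fun s => P s && ~~ Q s) l + count (fun s => P s && Q s) l.
Proof. by elim: l => [|s l IH] //=; rewrite IH; case: (P s); case: (Q s); lia. Qed.

Theorem corollary9 (k n : nat) :
  0 < k -> k * (k - 1) < 2 * n ->
  De k n = Do k n /\ ~~ odd (D k n).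
Proof.
move=> k_gt0 lt_kn.
have signed_D : ((De k n)%:R - (Do k n)%:R = signed_count (n + k) n k n n.+1 :> int)%R.
  rewrite /De /Do count_sign; apply: eq_bigr => s _; rewrite /signed_weight.
  case D_s: (Dk_part k n s) => //=; suff -> : all (fun y => y < n.+1) s by [].
  apply/allP => x s_x; case/and4P: D_s => /andP[_ /eqP <-] _ _ _.
  exact: mem_leq_sumn.
have De_Do : De k n = Do k n.
  apply/eqP; rewrite -(eqr_nat int) -subr_eq0 signed_D.
  by rewrite signed_count_Dpoly ?coef_Dpoly_eq0.
split=> //; rewrite /D (count_split _ (fun s => odd (size (big_parts s)))).
by rewrite -/(De k n) -/(Do k n) De_Do addnn odd_double.
Qed.
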